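(* Let $G$ be a finite connected undirected graph with $m$ edges, unknown to the agents. Two agents start at the same node of $G$ and both execute the navigation table $T_{\mathrm{explo}}$ (described in the context) in the asynchronous model. Then the two agents traverse all edges of $G$ twice and then stop at the same node after exactly $2m$ rounds.
   Context: Model. A passage (port) is an endpoint of an edge at one of its nodes; $u\xrightarrow{e}v$ denotes the passage of edge $e=(u,v)$ at $u$. Each passage carries one marker from a finite alphabet; initially every passage has the default marker $\emptyset$ (unmarked). The graph is unlabelled; an agent at a node sees only the markers of the passages at that node and remembers only the passage by which it arrived. A move of an agent at node $u$ consists of: (S1) reading the markers at $u$ and either stopping or choosing a passage $p_u$ at $u$; (S2) possibly changing the marker of $p_u$; (S3) traversing the corresponding edge; (S4) arriving at $v$ through passage $p_v$ and reading the markers at $v$; (S5) possibly changing the marker of $p_v$. In the asynchronous model, at each round an adversary chooses one of the two agents, which performs a whole move (S1)–(S5). Navigation tables. A navigation table is an ordered list of rows $(p_u, p_u', p_v, p_v')$. An agent at $u$ takes the first row (in order) such that $u$ has a passage with marker $p_u$ (rows with the same $p_u$ are distinguished only after arrival, by the condition in column $p_v$); it picks such a passage, replaces its marker by $p_u'$, traverses the edge, and on arriving at $v$ replaces the marker of the arrival passage by the $p_v'$ of the row whose $p_v$ condition holds. A dash means ''any marker / unchanged''. If no row applies, the agent stops. A node is ''discovered'' if it has been visited before. Table $T_{\mathrm{explo}}$ (rows in priority order, markers B, D, E, F): (1) $p_u=$B, $p_u'=$D, $p_v=$ -, $p_v'=$D; (2) $p_u=\emptyset$, $p_u'=$E, $p_v=$E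 (the arrival passage at $v$ is marked E), $p_v'=$D; (3) $p_u=\emptyset$, $p_u'=$E, $v$ already discovered, $p_v'=$B; (4) $p_u=\emptyset$, $p_u'=$E, $v$ undiscovered, $p_v'=$F; (5) $p_u=$F, $p_u'=$D, $p_v=$ -, $p_v'=$D; (6) $p_u=$E, $p_u'=$D, $p_v=$ -, $p_v'=$D. *)

From HB Require Import structures.
From mathcomp Require Import all_boot.
Set Implicit Arguments. Unset Strict Implicit. Unset Printing Implicit Defensive.

(* Markers: Emp is the default (unmarked) marker \emptyset. *)
Inductive marker := Emp | MB | MD | ME | MF.

Definition marker_eqb (x y : marker) : bool :=
  match x, y with
  | Emp, Emp | MB, MB | MD, MD | ME, ME | MF, MF => true
  | _, _ => false end.
Lemma marker_eqP : Equality.axiom marker_eqb.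
Proof. by do 2 case; constructor. Qed.
HB.instance Definition _ := hasDecEq.Build marker marker_eqP.

(* A finite simple undirected graph on V is given by a symmetric irreflexive
   relation adj.  The passage of the edge {u,v} at u is the ordered pair (u,v).
   Agents are indexed by bool. *)
Record config (V : finType) := Config {
  mk : V -> V -> marker;
  pos : bool -> V;
  visited : {set V}
}.

Record move (V : finType) := Move { agent : bool; src : V; dst : V }.

Definition init_config (V : finType) (s0 : V) : config V :=
  Config (fun _ _ => Emp) (fun _ => s0) [set s0].

Definition has_mark (V : finType) (adj : rel V) (c : config V) (u : V) (x : marker) :=
  [exists w, adj u w && (mk c u w == x)].

(* Column p_u of the first applicable row of T_explo at node u
   (rows 1; 2-4; 5; 6 in priority order), or None if the agent stops. *)
Definition select (V : finType) (adj : rel V) (c : config V) (u : V) : option marker :=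
  if has_mark adj c u MB then Some MB
  else if has_mark adj c u Emp then Some Emp
  else if has_mark adj c u MF then Some MF
  else if has_mark adj c u ME then Some ME
  else None.

(* A move (a, u, v) is possible: agent a is at u, (u,v) is a passage at u
   carrying the marker p_u of the first applicable row. The choice among
   several such passages is left open (adversarial). *)
Definition enabled (V : finType) (adj : rel V) (c : config V) (mv : move V) : Prop :=
  [/\ pos c (agent mv) = src mv, adj (src mv) (dst mv)
    & select adj c (src mv) = Some (mk c (src mv) (dst mv))].

(* new marker p_u' of the departure passage *)
Definition out_marker (x : marker) : marker :=
  if x == Emp then ME else MD.

(* new marker p_v' of the arrival passage (read before the update) *)
Definition in_marker (V : finType) (c : config V) (u v : V) : marker :=
  if mk c u v == Emp then
    (if mk c v u == ME then MD          (* row 2 *)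
     else if v \in visited c then MB    (* row 3 *)
     else MF)                           (* row 4 *)
  else MD.                              (* rows 1, 5, 6 *)

Definition next (V : finType) (c : config V) (mv : move V) : config V :=
  let u := src mv in let v := dst mv in
  let o := out_marker (mk c u v) in let i := in_marker c u v in
  Config (fun x y => if (x == u) && (y == v) then o
                     else if (x == v) && (y == u) then i else mk c x y)
         (fun b => if b == agent mv then v else pos c b)
         (v |: visited c).

(* s is a valid asynchronous execution from c: each round one agent performs
   a whole move. *)
Fixpoint valid_run (V : finType) (adj : rel V) (c : config V) (s : seq (move V)) : Prop :=
  if s is mv :: s' then enabled adj c mv /\ valid_run adj (next c mv) s' else True.

Definition final (V : finType) (c : config V) (s : seq (move V)) : config V :=
  foldl (@next V) c s.

Definition stuck (V : finType) (adj : rel V) (c : config V) : Prop :=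
  forall mv, ~ enabled adj c mv.

Definition edges (V : finType) (adj : rel V) : {set {set V}} :=
  [set [set x; y] | x in V, y in V & adj x y].

Definition traversals (V : finType) (e : {set V}) (s : seq (move V)) : nat :=
  count (fun mv => [set src mv; dst mv] == e) s.

From Pilot Require Import Defs.
From HB Require Import structures.
From mathcomp Require Import all_boot.
From mathcomp Require Import zify.
Set Implicit Arguments. Unset Strict Implicit. Unset Printing Implicit Defensive.

(** The two markers of an edge go from (∅,∅) to (E,F) or (E,B) at its first
    traversal (F when a new node is discovered) and to (D,D) at its second.
    Counting an end as pending while it carries ∅ or E, every traversal removes
    exactly one pending end of its edge, so each edge is traversed at most twice,
    and exactly twice iff it ends as (D,D).

    Reachable configurations satisfy an invariant: the F passages form a forest
    (at most one per node, decreasing some rank); at each node the number of E, F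
    and B passages plus the number of agents is even; there are no more B passages
    at a node than agents; and a discovered node with an unmarked passage has an
    E or F passage or an agent not matched by a B passage.  When both agents are
    stopped, every passage at their nodes is D, so parity puts them on one node.
    Then no B is left, and a node of maximal rank among those with E, F or B
    passages would carry a single F passage, against parity; hence no unmarked
    passage remains at a discovered node, every node is discovered by
    connectivity, and every passage is D. *)

Lemma card_eq_off1 (T : finType) (A B : {set T}) (z : T) :
  (forall y, y != z -> (y \in A) = (y \in B)) -> #|A| + (z \in B) = #|B| + (z \in A).
Proof.
move=> eqAB; rewrite (cardsD1 z A) (cardsD1 z B).
have -> : A :\ z = B :\ z.
  by apply/setP => y; rewrite !inE; case: eqP => // /eqP /eqAB.
lia.
Qed.

Lemma set2_eqP (T : finType) (a b x y : T) :
  [set a; b] = [set x; y] -> (x, y) = (a, b) \/ (x, y) = (b, a).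
Proof.
move=> E.
have : x \in [set a; b] by rewrite E !inE eqxx.
have : y \in [set a; b] by rewrite E !inE eqxx orbT.
have : a \in [set x; y] by rewrite -E !inE eqxx.
have : b \in [set x; y] by rewrite -E !inE eqxx orbT.
by rewrite !inE; do 4 case/orP => /eqP ?; subst; auto.
Qed.

Section Explo.
Variables (V : finType) (adj : rel V).
Hypotheses (adj_sym : symmetric adj) (adj_irr : irreflexive adj).

Definition pending (x : marker) : nat := match x with Emp | ME => 1 | _ => 0 end.
Definition pending_edge (c : config V) (x y : V) : nat :=
  pending (mk c x y) + pending (mk c y x).

Definition half_open (x : marker) : bool := (x == ME) || (x == MF) || (x == MB).

Definition edge_state_ok (p q : marker) : bool :=
  match p, q with
  | Emp, Emp | ME, MF | MF, ME | ME, MB | MB, ME | MD, MD => true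
  | _, _ => false end.

Definition agents_at (c : config V) (x : V) : nat :=
  (pos c true == x) + (pos c false == x).

Definition marked_nbrs (c : config V) (x : V) (p : pred marker) : {set V} :=
  [set y | adj x y && p (mk c x y)].

Definition nb_B (c : config V) (x : V) : nat := #|marked_nbrs c x (fun m => m == MB)|.
Definition open_degree (c : config V) (x : V) : nat := #|marked_nbrs c x half_open|.

Definition has_unmarked (c : config V) (x : V) : Prop :=
  exists2 y, adj x y & mk c x y = Emp.
Definition has_EF (c : config V) (x : V) : Prop :=
  exists2 y, adj x y & (mk c x y == ME) || (mk c x y == MF).

Record explo_inv (c : config V) : Prop := {
  inv_ends : forall x y, adj x y -> edge_state_ok (mk c x y) (mk c y x);
  inv_marked_visited : forall x y, adj x y -> mk c x y != Emp -> x \in visited c;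
  inv_pos_visited : forall b, pos c b \in visited c;
  inv_B_agents : forall x, nb_B c x <= agents_at c x;
  inv_unmarked : forall x, x \in visited c -> has_unmarked c x ->
    nb_B c x < agents_at c x \/ has_EF c x;
  inv_parity : forall x, (open_degree c x + agents_at c x) %% 2 = 0;
  inv_F_unique : forall x y z, adj x y -> adj x z -> mk c x y = MF -> mk c x z = MF -> y = z;
  inv_F_rank : exists r : V -> nat, forall x y, adj x y -> mk c x y = MF -> r y < r x
}.

Lemma explo_inv_init (s0 : V) : explo_inv (init_config s0).
Proof.
have nbrs0 x p : ~~ p Emp -> marked_nbrs (init_config s0) x p = set0.
  by move=> np; apply/setP => y; rewrite !inE /= (negbTE np) andbF.
split => //=.
- by move=> b; rewrite inE.
- by move=> x; rewrite /nb_B nbrs0 // cards0.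
- by move=> x; rewrite inE => /eqP -> _; left; rewrite /nb_B nbrs0 // cards0 /agents_at /= eqxx.
- by move=> x; rewrite /open_degree nbrs0 // cards0 /agents_at /=; case: (s0 == x).
- by exists (fun _ => 0).
Qed.

Lemma select_witness c u x :
  select adj c u = Some x -> exists2 w, adj u w & mk c u w = x.
Proof.
rewrite /select /has_mark.
by repeat case: ifP => [/existsP [w /andP [auw /eqP <-]] [<-]|_]; try by exists w.
Qed.

Lemma has_markPn c u x : ~~ has_mark adj c u x -> forall w, adj u w -> mk c u w != x.
Proof. by move=> /existsPn nx w auw; move: (nx w); rewrite auw. Qed.

Lemma select_cases c u x : select adj c u = Some x ->
  [\/ x = MB,
      x = Emp /\ ~~ has_mark adj c u MB,
      [/\ x = MF, ~~ has_mark adj c u MB & ~~ has_mark adj c u Emp] |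
      [/\ x = ME, ~~ has_mark adj c u MB, ~~ has_mark adj c u Emp
        & ~~ has_mark adj c u MF]].
Proof.
rewrite /select.
case: ifP => [_ [<-]|hB]; first by constructor 1.
case: ifP => [_ [<-]|hEmp]; first by constructor 2; rewrite ?hB.
case: ifP => [_ [<-]|hF]; first by constructor 3; rewrite ?hB ?hEmp.
by case: ifP => [_ [<-]|_] //; constructor 4; rewrite ?hB ?hEmp ?hF.
Qed.

Lemma edge_state_okC p q : edge_state_ok p q = edge_state_ok q p.
Proof. by case: p; case: q. Qed.

Lemma out_marker_neq x :
  [/\ out_marker x != MF, out_marker x != Emp & out_marker x != MB].
Proof. by rewrite /out_marker; case: ifP. Qed.

Lemma nb_B0 c u : (forall w, adj u w -> mk c u w != MB) -> nb_B c u = 0.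
Proof.
move=> noB; apply/eqP; rewrite cards_eq0; apply/eqP/setP => y; rewrite !inE.
by apply/negbTE/negP => /andP [ay /eqP e]; move: (noB y ay); rewrite e.
Qed.

Section Step.
Variables (c : config V) (a : bool) (u v : V).
Hypotheses (Hc : explo_inv c) (Hpos : pos c a = u) (Huv : adj u v).
Hypothesis Hsel : select adj c u = Some (mk c u v).
Local Notation c' := (Defs.next c (Move a u v)).

Lemma src_neq_dst : u != v.
Proof. by apply: contraTneq Huv => ->; rewrite adj_irr. Qed.

Lemma dst_neq_src : v != u.
Proof. by rewrite eq_sym src_neq_dst. Qed.

Lemma mk_next x y : mk c' x y =
  if (x == u) && (y == v) then out_marker (mk c u v)
  else if (x == v) && (y == u) then in_marker c u v else mk c x y.
Proof. by []. Qed.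

Lemma mk_next_src_dst : mk c' u v = out_marker (mk c u v).
Proof. by rewrite mk_next !eqxx. Qed.

Lemma mk_next_dst_src : mk c' v u = in_marker c u v.
Proof. by rewrite mk_next (negbTE dst_neq_src) !eqxx. Qed.

Lemma mk_next_other x y : (x == u) && (y == v) = false -> (x == v) && (y == u) = false ->
  mk c' x y = mk c x y.
Proof. by rewrite mk_next => -> ->. Qed.

Lemma mk_next_src y : y != v -> mk c' u y = mk c u y.
Proof. by move=> yv; rewrite mk_next_other // ?eqxx ?(negbTE yv) ?(negbTE src_neq_dst). Qed.

Lemma mk_next_dst y : y != u -> mk c' v y = mk c v y.
Proof. by move=> yu; rewrite mk_next_other // ?eqxx ?(negbTE yu) ?(negbTE dst_neq_src). Qed.

Lemma mk_next_offl x y : x != u -> x != v -> mk c' x y = mk c x y.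
Proof. by move=> xu xv; rewrite mk_next_other // ?(negbTE xu) ?(negbTE xv). Qed.

Lemma mk_next_offr x y : x != u -> x != v -> mk c' y x = mk c y x.
Proof. by move=> xu xv; rewrite mk_next_other // ?(negbTE xu) ?(negbTE xv) ?andbF. Qed.

Lemma agents_at_next x : agents_at c' x + (u == x) = agents_at c x + (v == x).
Proof.
rewrite /agents_at /=; move: Hpos; case: a => /= <-;
  by case: (pos c true == x); case: (pos c false == x); case: (v == x).
Qed.

Lemma agents_at_next_off x : x != u -> x != v -> agents_at c' x = agents_at c x.
Proof.
move=> xu xv; have := agents_at_next x.
by rewrite eq_sym (negbTE xu) eq_sym (negbTE xv) !addn0.
Qed.

(* The four kinds of moves: rows 2-4, row 1, row 5 and row 6 of the table. *)
Lemma move_cases :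
 [\/ [/\ mk c u v = Emp, mk c v u = Emp & forall w, adj u w -> mk c u w != MB],
     mk c u v = MB /\ mk c v u = ME,
     [/\ mk c u v = MF, mk c v u = ME
       & forall w, adj u w -> mk c u w != MB /\ mk c u w != Emp] |
     [/\ mk c u v = ME, mk c v u = MF \/ mk c v u = MB
       & forall w, adj u w -> [/\ mk c u w != MB, mk c u w != Emp & mk c u w != MF]]].
Proof.
have := inv_ends Hc Huv.
case: (select_cases Hsel) => [e|[e nB]|[e nB nEmp]|[e nB nEmp nF]]; rewrite e;
  case: (mk c v u) => // _.
- by constructor 2.
- by constructor 1; split => // w /(has_markPn nB).
- by constructor 3; split => // w aw; rewrite (has_markPn nB) ?(has_markPn nEmp).
- by constructor 4; split; [|right|move=> w aw; rewrite !(has_markPn _ aw)].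
- by constructor 4; split; [|left|move=> w aw; rewrite !(has_markPn _ aw)].
Qed.

Lemma marked_nbrs_next_off x p : x != u -> x != v -> marked_nbrs c' x p = marked_nbrs c x p.
Proof. by move=> xu xv; apply/setP => y; rewrite !inE mk_next_offl. Qed.

Lemma marked_nbrs_next_src p :
  #|marked_nbrs c' u p| + p (mk c u v) = #|marked_nbrs c u p| + p (mk c' u v).
Proof.
have := @card_eq_off1 _ (marked_nbrs c' u p) (marked_nbrs c u p) v.
by rewrite !inE Huv => -> // y yv; rewrite !inE mk_next_src.
Qed.

Lemma marked_nbrs_next_dst p :
  #|marked_nbrs c' v p| + p (mk c v u) = #|marked_nbrs c v p| + p (mk c' v u).
Proof.
have := @card_eq_off1 _ (marked_nbrs c' v p) (marked_nbrs c v p) u.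
by rewrite !inE adj_sym Huv => -> // y yu; rewrite !inE mk_next_dst.
Qed.

Lemma src_visited : u \in visited c.
Proof. by rewrite -Hpos inv_pos_visited. Qed.

Lemma in_marker_F : in_marker c u v = MF -> v \notin visited c.
Proof. by rewrite /in_marker; case: ifP => _ //; case: ifP => _ //; case: ifP. Qed.

Lemma unvisited_unmarked y : v \notin visited c -> adj v y -> mk c v y = Emp.
Proof. by move=> nv ay; apply/eqP; apply: contraNT nv; apply: inv_marked_visited ay. Qed.

Lemma ends_next x y : adj x y -> edge_state_ok (mk c' x y) (mk c' y x).
Proof.
move=> axy.
have ok_uv : edge_state_ok (mk c' u v) (mk c' v u).
  rewrite mk_next_src_dst mk_next_dst_src /in_marker.
  by case: move_cases => [[-> -> _]|[-> ->]|[-> -> _]|[-> [->|->] _]] //=; case: ifP.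
have yx : y != x by apply: contraTneq axy => ->; rewrite adj_irr.
case: (eqVneq x u) => [exu|xu].
  subst x; case: (eqVneq y v) => [->|yv] //.
  by rewrite mk_next_src // mk_next_offl //; apply: inv_ends.
case: (eqVneq x v) => [exv|xv].
  subst x; case: (eqVneq y u) => [->|yu]; first by rewrite edge_state_okC.
  by rewrite mk_next_dst // mk_next_offl //; apply: inv_ends.
by rewrite mk_next_offl // mk_next_offr //; apply: inv_ends.
Qed.

Lemma marked_visited_next x y : adj x y -> mk c' x y != Emp -> x \in visited c'.
Proof.
move=> axy marked; rewrite !inE.
case: (eqVneq x v) => [//|xv] /=; case: (eqVneq x u) => [->|xu]; first exact: src_visited.
by rewrite mk_next_offl // in marked; apply: inv_marked_visited marked.
Qed.

Lemma pos_visited_next b : pos c' b \in visited c'.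
Proof. by rewrite /= !inE; case: ifP => _; rewrite ?eqxx ?inv_pos_visited ?orbT. Qed.

Lemma B_agents_next x : nb_B c' x <= agents_at c' x.
Proof.
case: (eqVneq x u) => [->|xu].
  have := marked_nbrs_next_src (fun m => m == MB); have := agents_at_next u.
  have := inv_B_agents Hc u; rewrite /nb_B mk_next_src_dst eqxx (negbTE dst_neq_src) /=.
  have [_ _ /negbTE ->] := out_marker_neq (mk c u v).
  case: move_cases => [[-> _ noB]|[-> _]|[-> _ noB]|[-> _ noB]] /=; try lia;
    (suff: nb_B c u = 0 by rewrite /nb_B; lia); apply: nb_B0 => w /noB //; by case.
case: (eqVneq x v) => [->|xv].
  have := marked_nbrs_next_dst (fun m => m == MB); have := agents_at_next v.
  have := inv_B_agents Hc v; rewrite /nb_B eqxx (negbTE src_neq_dst) /=.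
  have := leq_b1 (mk c' v u == MB); have := leq_b1 (mk c v u == MB); lia.
by rewrite /nb_B marked_nbrs_next_off // agents_at_next_off //; apply: inv_B_agents.
Qed.

Lemma parity_next x : (open_degree c' x + agents_at c' x) %% 2 = 0.
Proof.
case: (eqVneq x u) => [->|xu].
  have := marked_nbrs_next_src half_open; have := agents_at_next u.
  have := inv_parity Hc u; rewrite /open_degree mk_next_src_dst eqxx (negbTE dst_neq_src) /=.
  by case: move_cases => [[-> _ _]|[-> _]|[-> _ _]|[-> _ _]] /=; lia.
case: (eqVneq x v) => [->|xv].
  have := marked_nbrs_next_dst half_open; have := agents_at_next v.
  have := inv_parity Hc v.
  rewrite /open_degree eqxx (negbTE src_neq_dst) mk_next_dst_src /in_marker /=.
  case: move_cases => [[-> -> _]|[-> ->]|[-> -> _]|[-> [->|->] _]] /=; try lia.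
  by case: (v \in visited c) => /=; lia.
rewrite /open_degree marked_nbrs_next_off // agents_at_next_off //; exact: inv_parity.
Qed.

Lemma F_unique_next x y z : adj x y -> adj x z -> mk c' x y = MF -> mk c' x z = MF -> y = z.
Proof.
move=> axy axz.
have src_F w : mk c' u w = MF -> w != v.
  move=> Fw; apply/eqP => ew; move: Fw; rewrite ew mk_next_src_dst.
  by have [/eqP] := out_marker_neq (mk c u v).
case: (eqVneq x u) => [exu|xu].
  subst x => Fy Fz; have yv := src_F _ Fy; have zv := src_F _ Fz.
  rewrite (mk_next_src yv) in Fy; rewrite (mk_next_src zv) in Fz.
  exact: (inv_F_unique Hc axy axz).
case: (eqVneq x v) => [exv|xv]; last first.
  by rewrite !mk_next_offl // => Fy Fz; apply: (inv_F_unique Hc axy axz).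
subst x => Fy Fz.
case: (eqVneq y u) => [eyu|yu]; case: (eqVneq z u) => [ezu|zu].
- by rewrite eyu ezu.
- move: Fy Fz; rewrite eyu mk_next_dst_src mk_next_dst // => /in_marker_F nv.
  by rewrite (unvisited_unmarked nv axz).
- move: Fy Fz; rewrite ezu mk_next_dst_src mk_next_dst // => Fy /in_marker_F nv.
  by rewrite (unvisited_unmarked nv axy) in Fy.
- by rewrite !mk_next_dst // in Fy Fz; apply: (inv_F_unique Hc axy axz).
Qed.

(* The only new F passage is v -> u, created when v is discovered: rank v above u. *)
Lemma F_rank_next : exists r : V -> nat, forall x y, adj x y -> mk c' x y = MF -> r y < r x.
Proof.
have [r Hr] := inv_F_rank Hc.
have F_old x y : mk c' x y = MF -> (x == v) && (y == u) \/ mk c x y = MF.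
  rewrite mk_next; case: ifP => [_ F|_].
    by have [] := out_marker_neq (mk c u v); rewrite F.
  by case: ifP => [vu _|_ F]; [left | right].
case: (boolP (v \in visited c)) => vv.
  exists r => x y axy /[dup] F /F_old [/andP [/eqP ex /eqP ey]|]; last exact: Hr.
  by move: F; rewrite ex ey mk_next_dst_src => /in_marker_F; rewrite vv.
exists (fun x => if x == v then (r u).+1 else r x) => x y axy /F_old.
case=> [/andP [/eqP -> /eqP ->]|F]; first by rewrite eqxx (negbTE src_neq_dst).
have xv : x != v.
  by apply/eqP => ex; subst x; rewrite (unvisited_unmarked vv axy) in F.
have yv : y != v.
  apply/eqP => ey; subst y; have ayx : adj v x by rewrite adj_sym.
  by have := inv_ends Hc axy; rewrite F (unvisited_unmarked vv ayx).
by rewrite (negbTE xv) (negbTE yv); apply: Hr.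
Qed.

Lemma unmarked_next_src : has_unmarked c' u -> nb_B c' u < agents_at c' u \/ has_EF c' u.
Proof.
move=> [y auy Ey].
have yv : y != v.
  apply/eqP => eyv; move: Ey; rewrite eyv mk_next_src_dst.
  by have [_ /eqP] := out_marker_neq (mk c u v).
rewrite mk_next_src // in Ey.
have := marked_nbrs_next_src (fun m => m == MB); have := agents_at_next u.
rewrite /nb_B mk_next_src_dst eqxx (negbTE dst_neq_src) /=.
case: move_cases => [[e _ _]|[e _]|[e _ noEmp]|[e _ noEmp]]; rewrite e.
- by move=> _ _; right; exists v => //; rewrite mk_next_src_dst e.
- case: (inv_unmarked Hc src_visited (ex_intro2 _ _ y auy Ey)) => [lt|[y' auy' EF]].
    by rewrite /nb_B in lt => /= ? ?; left; lia.
  move=> _ _; right; exists y' => //.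
  have y'v : y' != v by apply: contraTneq EF => ->; rewrite e.
  by rewrite mk_next_src.
- by case: (noEmp y auy); rewrite Ey.
- by case: (noEmp y auy); rewrite Ey.
Qed.

Lemma in_marker_unvisited : v \notin visited c -> in_marker c u v = MF.
Proof.
move=> vv; have avu : adj v u by rewrite adj_sym.
have := inv_ends Hc Huv; rewrite /in_marker (unvisited_unmarked vv avu) (negbTE vv).
by case: (mk c u v).
Qed.

Lemma unmarked_next_dst : has_unmarked c' v -> nb_B c' v < agents_at c' v \/ has_EF c' v.
Proof.
move=> [y avy Ey].
have yu : y != u.
  apply/eqP => eyu; move: Ey; rewrite eyu mk_next_dst_src /in_marker.
  by case: ifP => _ //; case: ifP => _ //; case: ifP.
rewrite mk_next_dst // in Ey.
have avu : adj v u by rewrite adj_sym.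
case: (boolP ((mk c' v u == ME) || (mk c' v u == MF))) => [EF|notEF].
  by right; exists u.
have vv : v \in visited c.
  apply: contraNT notEF => /in_marker_unvisited.
  by rewrite -mk_next_dst_src => ->; rewrite orbT.
have card_eq := marked_nbrs_next_dst (fun m => m == MB).
have ag_eq := agents_at_next v; rewrite eqxx (negbTE src_neq_dst) in ag_eq.
have B_le := inv_B_agents Hc v.
have := leq_b1 (mk c' v u == MB); have := leq_b1 (mk c v u == MB).
rewrite /nb_B in B_le *.
case: (inv_unmarked Hc vv (ex_intro2 _ _ y avy Ey)) => [lt|[y' avy' EF]].
  by rewrite /nb_B in lt => *; left; lia.
case: (eqVneq y' u) => [ey'|y'u]; last by right; exists y' => //; rewrite mk_next_dst.
subst y'.
have D_vu : mk c' v u = MD.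
  rewrite mk_next_dst_src /in_marker; have := inv_ends Hc Huv.
  by case/orP: EF => /eqP ->; case: (mk c u v).
have notB : (mk c v u == MB) = false by case/orP: EF => /eqP ->.
by rewrite D_vu notB /= in card_eq * => *; left; lia.
Qed.

Lemma unmarked_next_off x : x != u -> x != v -> x \in visited c' -> has_unmarked c' x ->
  nb_B c' x < agents_at c' x \/ has_EF c' x.
Proof.
move=> xu xv; rewrite !inE (negbTE xv) /= => xvis [y axy Ey].
rewrite mk_next_offl // in Ey.
rewrite /nb_B marked_nbrs_next_off // agents_at_next_off //.
case: (inv_unmarked Hc xvis (ex_intro2 _ _ y axy Ey)) => [lt|[y' axy' EF]]; first by left.
by right; exists y' => //; rewrite mk_next_offl.
Qed.

Lemma unmarked_next x : x \in visited c' -> has_unmarked c' x ->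
  nb_B c' x < agents_at c' x \/ has_EF c' x.
Proof.
case: (eqVneq x u) => [-> _|xu]; first exact: unmarked_next_src.
case: (eqVneq x v) => [-> _|xv]; first exact: unmarked_next_dst.
exact: unmarked_next_off.
Qed.

Lemma explo_inv_next : explo_inv c'.
Proof.
split.
- exact: ends_next.
- exact: marked_visited_next.
- exact: pos_visited_next.
- exact: B_agents_next.
- exact: unmarked_next.
- exact: parity_next.
- exact: F_unique_next.
- exact: F_rank_next.
Qed.

Lemma pending_edge_next_src_dst : pending_edge c' u v + 1 = pending_edge c u v.
Proof.
rewrite /pending_edge mk_next_src_dst mk_next_dst_src /in_marker.
case: move_cases => [[-> -> _]|[-> ->]|[-> -> _]|[-> [->|->] _]] //=.
by case: (v \in visited c).
Qed.

Lemma pending_edge_next x y :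
  ([set u; v] == [set x; y]) + pending_edge c' x y = pending_edge c x y.
Proof.
have pendingC d p q : pending_edge d p q = pending_edge d q p by apply: addnC.
case: eqP => [/set2_eqP [[-> ->]|[-> ->]]|ne].
- by rewrite addnC pending_edge_next_src_dst.
- by rewrite !(pendingC _ v) addnC pending_edge_next_src_dst.
have off_uv : (x == u) && (y == v) = false.
  by apply/negbTE/negP => /andP [/eqP xu /eqP yv]; apply: ne; rewrite xu yv.
have off_vu : (x == v) && (y == u) = false.
  by apply/negbTE/negP => /andP [/eqP xv /eqP yu]; apply: ne; rewrite xv yu setUC.
by rewrite /pending_edge !mk_next_other // andbC.
Qed.

End Step.

Lemma explo_inv_final c s : explo_inv c -> valid_run adj c s -> explo_inv (final c s).
Proof.
elim: s c => [|[a u v] s IH] c //= Hc [[Hpos Huv Hsel] Hrun].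
by apply: IH Hrun; apply: explo_inv_next.
Qed.

Lemma traversals_pending c s x y : explo_inv c -> valid_run adj c s ->
  traversals [set x; y] s + pending_edge (final c s) x y = pending_edge c x y.
Proof.
elim: s c => [|[a u v] s IH] c //= Hc [[Hpos Huv Hsel] Hrun].
have Hc' := explo_inv_next Hc Hpos Huv Hsel.
by rewrite -addnA [_ + pending_edge _ _ _]IH // pending_edge_next.
Qed.

Lemma size_run c s : valid_run adj c s -> size s = \sum_(e in edges adj) traversals e s.
Proof.
elim: s c => [|[a u v] s IH] c /=; first by rewrite big1.
move=> [[_ Huv _] Hrun]; rewrite (IH _ Hrun).
have -> : \sum_(e in edges adj) traversals e (Move a u v :: s) =
          \sum_(e in edges adj) (([set u; v] == e) + traversals e s) by apply: eq_bigr.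
rewrite big_split /= -add1n; congr (_ + _).
have uv_edge : [set u; v] \in edges adj by apply/imset2P; exists u v; rewrite ?inE ?Huv.
rewrite (bigD1 _ uv_edge) /= eqxx big1 ?addn0 // => e /andP [_ ne].
by rewrite eq_sym (negbTE ne).
Qed.

Section Stuck.
Variable c : config V.
Hypotheses (Hc : explo_inv c) (Hstuck : stuck adj c).

Lemma stuck_pos_D b w : adj (pos c b) w -> mk c (pos c b) w = MD.
Proof.
move=> aw; case E: (select adj c (pos c b)) => [x|].
  have [w' aw' Ew'] := select_witness E.
  by exfalso; apply: (@Hstuck (Move b (pos c b) w')); split => //=; rewrite E Ew'.
have has x : mk c (pos c b) w = x -> has_mark adj c (pos c b) x.
  by move=> Ex; apply/existsP; exists w; rewrite aw Ex eqxx.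
case M: (mk c (pos c b) w) => //; move: E; rewrite /select (has _ M).
all: by repeat case: ifP.
Qed.

Lemma stuck_open_degree b : open_degree c (pos c b) = 0.
Proof.
apply/eqP; rewrite cards_eq0; apply/eqP/setP => w; rewrite !inE.
by case aw: (adj _ w) => //=; rewrite stuck_pos_D.
Qed.

(* An agent alone would make the parity at its node odd. *)
Lemma stuck_same_pos : pos c true = pos c false.
Proof.
have := inv_parity Hc (pos c true); rewrite stuck_open_degree /agents_at eqxx.
by case: eqVneq.
Qed.

Lemma stuck_agents_off x : x != pos c true -> agents_at c x = 0.
Proof. by move=> xp; rewrite /agents_at -stuck_same_pos eq_sym (negbTE xp). Qed.

Lemma stuck_no_B x y : adj x y -> mk c x y != MB.
Proof.
move=> axy; case: (eqVneq x (pos c true)) => [ex|xp].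
  by rewrite ex in axy *; rewrite stuck_pos_D.
have := inv_B_agents Hc x; rewrite stuck_agents_off // leqn0 /nb_B cards_eq0 => /eqP nB.
apply/negP => /eqP Bxy; have : y \in marked_nbrs c x (fun m => m == MB) by rewrite inE axy Bxy.
by rewrite nB inE.
Qed.

Definition open_node (z : V) : bool := [exists w, adj z w && half_open (mk c z w)].

(* At a node of maximal rank, an E passage would face an F passage pointing upwards. *)
Lemma stuck_top_open_F (r : V -> nat) z w :
  (forall x y, adj x y -> mk c x y = MF -> r y < r x) ->
  (forall z', open_node z' -> r z' <= r z) ->
  adj z w -> half_open (mk c z w) -> mk c z w = MF.
Proof.
move=> r_F z_top azw; have awz : adj w z by rewrite adj_sym.
move: (inv_ends Hc azw) (stuck_no_B azw) (stuck_no_B awz).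
case: (mk c z w) => //; case E: (mk c w z) => // _ _ _ _.
have /z_top : open_node w by apply/existsP; exists z; rewrite awz E.
by have := r_F _ _ awz E; lia.
Qed.

Lemma stuck_not_open x y : adj x y -> ~~ half_open (mk c x y).
Proof.
move=> axy; apply/negP => open_xy.
have [r r_F] := inv_F_rank Hc.
have [|z open_z z_top] := @arg_maxnP _ x open_node r.
  by apply/existsP; exists y; rewrite axy open_xy.
have z_off : z != pos c true.
  apply: contraTneq open_z => ->; apply/existsPn => w.
  by rewrite negb_and; case aw: (adj _ w) => //=; rewrite stuck_pos_D.
have [w0 /andP [azw0 open_w0]] := existsP open_z.
have single : marked_nbrs c z half_open = [set w0].
  apply/setP => w; rewrite !inE; apply/idP/idP => [/andP [azw open_w]|/eqP ->].
    by apply/eqP/(inv_F_unique Hc azw azw0); apply: (stuck_top_open_F r_F z_top).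
  by rewrite azw0 open_w0.
by have := inv_parity Hc z; rewrite /open_degree single cards1 stuck_agents_off.
Qed.

Lemma stuck_visited_marked x y : x \in visited c -> adj x y -> mk c x y != Emp.
Proof.
move=> xv axy; apply/eqP => Exy.
case: (inv_unmarked Hc xv (ex_intro2 _ _ y axy Exy)) => [lt|[y' axy' EF]].
  case: (eqVneq x (pos c true)) => [ex|xp]; last by rewrite stuck_agents_off in lt.
  by rewrite ex in axy Exy; rewrite stuck_pos_D in Exy.
by have := stuck_not_open axy'; case/orP: EF => /eqP ->.
Qed.

Lemma stuck_visited_closed : closed adj (visited c).
Proof.
suff visited_adj x y : adj x y -> x \in visited c -> y \in visited c.
  by move=> x y axy; apply/idP/idP; apply: visited_adj; rewrite // adj_sym.
move=> axy xv; have ayx : adj y x by rewrite adj_sym.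
apply: (inv_marked_visited Hc ayx).
by have := inv_ends Hc axy; move: (stuck_visited_marked xv axy); case: (mk c x y); case: (mk c y x).
Qed.

Lemma stuck_all_D : (forall x y, connect adj x y) -> forall x y, adj x y -> mk c x y = MD.
Proof.
move=> adj_conn x y axy.
have xv : x \in visited c.
  by rewrite -(closed_connect stuck_visited_closed (adj_conn (pos c true) x)) inv_pos_visited.
by move: (stuck_visited_marked xv axy) (stuck_not_open axy); case: (mk c x y).
Qed.

End Stuck.
End Explo.

Theorem theorem4 (V : finType) (adj : rel V)
  (adj_sym : symmetric adj) (adj_irr : irreflexive adj)
  (adj_conn : forall x y : V, connect adj x y)
  (s0 : V) (s : seq (move V)) :
  valid_run adj (init_config s0) s ->
  size s <= 2 * #|edges adj| /\
  (stuck adj (final (init_config s0) s) ->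
     [/\ size s = 2 * #|edges adj|,
         forall e, e \in edges adj -> traversals e s = 2
       & pos (final (init_config s0) s) true = pos (final (init_config s0) s) false]).
Proof.
move=> run.
have inv0 := explo_inv_init adj s0.
have inv_end := explo_inv_final adj_sym adj_irr inv0 run.
have edge_count e : e \in edges adj -> exists2 xy : V * V, adj xy.1 xy.2 &
    traversals e s + pending_edge (final (init_config s0) s) xy.1 xy.2 = 2.
  case/imset2P => x y _; rewrite inE => /andP [_ axy] ->; exists (x, y) => //.
  exact: (traversals_pending adj_sym adj_irr _ _ inv0 run).
rewrite (size_run run) mulnC -sum_nat_const; split.
  by apply: leq_sum => e /edge_count [xy _ <-]; apply: leq_addr.
move=> stuck_end; have all_D := stuck_all_D adj_sym inv_end stuck_end adj_conn.
have twice e : e \in edges adj -> traversals e s = 2.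
  move=> /edge_count [[x y] /= axy]; have ayx : adj y x by rewrite adj_sym.
  by rewrite /pending_edge !all_D ?addn0.
by split; [apply: eq_bigr | | apply: stuck_same_pos inv_end stuck_end].
Qed.
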